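(* Let $K=\langle \mathcal{T}_{strict},\mathcal{T}_{C_1},\ldots,\mathcal{T}_{C_k},\mathcal{A}\rangle$ be a ranked $\mathcal{EL}^{+}_{\bot}$ knowledge base over $\mathcal{C}=\{C_1,\ldots,C_k\}$. If $K$ has a preferential model, then there is an $\mathcal{EL}^{+}_{\bot}$ interpretation that is $\mathbf{T}$-compliant for $K$.
   Context: A ranked knowledge base over a finite set $\mathcal{C}=\{C_1,\ldots,C_k\}$ of $\mathcal{EL}^{+}_{\bot}$ concepts is $K=\langle \mathcal{T}_{strict},\mathcal{T}_{C_1},\ldots,\mathcal{T}_{C_k},\mathcal{A}\rangle$ with $\mathcal{T}_{strict}$ a set of concept and role inclusions, $\mathcal{A}$ an ABox, and each $\mathcal{T}_{C_j}$ a finite set of pairs $(\mathbf{T}(C_j)\sqsubseteq D,r)$, $r$ a non-negative integer. A preferential model of $K$ is a triple $\langle\Delta,<,\cdot^I\rangle$ where $\langle\Delta,\cdot^I\rangle$ is an $\mathcal{EL}^{+}_{\bot}$ interpretation satisfying all inclusions in $\mathcal{T}_{strict}$ and all assertions in $\mathcal{A}$, $<$ is an irreflexive, transitive, well-founded relation on $\Delta$, and $\min_<(C_j^I)\subseteq D^I$ for every typicality inclusion $\mathbf{T}(C_j)\sqsubseteq D$ in $K$ (where $\min_<(S)=\{u\in S\mid\nexists z\in S, z<u\}$). An element $x$ satisfies $\mathbf{T}(C_j)\sqsubseteq D$ in $I$ iff $x\notin C_j^I$ or $x\in D^I$. An $\mathcal{EL}^{+}_{\bot}$ interpretation $I$ is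 $\mathbf{T}$-compliant for $K$ if $I$ satisfies $\mathcal{T}_{strict}$ and, for every $C_h\in\mathcal{C}$ with $C_h^I\neq\emptyset$, there is $x\in C_h^I$ satisfying all defeasible inclusions in $\mathcal{T}_{C_h}$. *)

From Stdlib Require Import List Relations Wellfounded.
Import ListNotations.

Definition cname := nat.
Definition rname := nat.
Definition iname := nat.

Inductive concept : Type :=
| CTop : concept
| CBot : concept
| CAtom : cname -> concept
| CAnd : concept -> concept -> concept
| CEx : rname -> concept -> concept.

Inductive saxiom : Type :=
| CIncl : concept -> concept -> saxiom
| RIncl : list rname -> rname -> saxiom.

Inductive assertion : Type :=
| CAssert : concept -> iname -> assertion
| RAssert : rname -> iname -> iname -> assertion.

Record interp (Delta : Type) : Type := Interp {
  cint : cname -> Delta -> Prop;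
  rint : rname -> Delta -> Delta -> Prop;
  iint : iname -> Delta
}.
Arguments cint {Delta} _ _ _.
Arguments rint {Delta} _ _ _ _.
Arguments iint {Delta} _ _.

Fixpoint cext {Delta : Type} (I : interp Delta) (C : concept) : Delta -> Prop :=
  match C with
  | CTop => fun _ => True
  | CBot => fun _ => False
  | CAtom A => cint I A
  | CAnd C1 C2 => fun x => cext I C1 x /\ cext I C2 x
  | CEx r C1 => fun x => exists y, rint I r x y /\ cext I C1 y
  end.

Fixpoint chain_ext {Delta : Type} (I : interp Delta) (rs : list rname)
  : Delta -> Delta -> Prop :=
  match rs with
  | [] => fun x y => x = y
  | r :: rs' => fun x z => exists y, rint I r x y /\ chain_ext I rs' y z
  end.

Definition sat_saxiom {Delta : Type} (I : interp Delta) (ax : saxiom) : Prop :=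
  match ax with
  | CIncl C D => forall x, cext I C x -> cext I D x
  | RIncl rs s => forall x y, chain_ext I rs x y -> rint I s x y
  end.

Definition sat_assertion {Delta : Type} (I : interp Delta) (a : assertion) : Prop :=
  match a with
  | CAssert C i => cext I C (iint I i)
  | RAssert r i j => rint I r (iint I i) (iint I j)
  end.

(* A ranked knowledge base K = <T_strict, T_{C_1}, ..., T_{C_k}, A>.
   [kb_typ] lists the pairs (C_j, T_{C_j}), where T_{C_j} is a finite list of
   pairs (D, r) standing for (T(C_j) ⊑ D, r) with rank r. *)
Record ranked_kb : Type := RankedKB {
  kb_strict : list saxiom;
  kb_typ : list (concept * list (concept * nat));
  kb_abox : list assertion
}.

Definition kb_concepts (K : ranked_kb) : list concept := map fst (kb_typ K).

Definition typ_incl_in (K : ranked_kb) (C D : concept) : Prop :=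
  exists TC r, In (C, TC) (kb_typ K) /\ In (D, r) TC.

Definition sat_strict {Delta : Type} (I : interp Delta) (K : ranked_kb) : Prop :=
  forall ax, In ax (kb_strict K) -> sat_saxiom I ax.

Definition min_lt {Delta : Type} (lt : Delta -> Delta -> Prop) (S : Delta -> Prop)
  (u : Delta) : Prop :=
  S u /\ ~ (exists z, S z /\ lt z u).

Definition preferential_model {Delta : Type} (lt : Delta -> Delta -> Prop)
  (I : interp Delta) (K : ranked_kb) : Prop :=
  sat_strict I K /\
  (forall a, In a (kb_abox K) -> sat_assertion I a) /\
  (forall x, ~ lt x x) /\
  transitive Delta lt /\
  well_founded lt /\
  (forall C D, typ_incl_in K C D ->
     forall u, min_lt lt (cext I C) u -> cext I D u).

Definition sat_typ_elem {Delta : Type} (I : interp Delta) (C D : concept)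
  (x : Delta) : Prop :=
  ~ cext I C x \/ cext I D x.

Definition T_compliant {Delta : Type} (I : interp Delta) (K : ranked_kb) : Prop :=
  sat_strict I K /\
  (forall Ch, In Ch (kb_concepts K) ->
     (exists y, cext I Ch y) ->
     exists x, cext I Ch x /\
       (forall D, typ_incl_in K Ch D -> sat_typ_elem I Ch D x)).

(* A preferential model is itself T-compliant: by well-foundedness every
   nonempty extension C_h^I has a <-minimal element, and minimal elements of
   C_h^I satisfy every typicality inclusion for C_h. *)
From Stdlib Require Import Classical.

Lemma well_founded_min_lt {A : Type} (lt : A -> A -> Prop) (S : A -> Prop) :
  well_founded lt -> forall y, S y -> exists u, min_lt lt S u.
Proof.
  intros Hwf y Hy.
  apply NNPP; intro Hnomin.
  assert (Hempty : forall x, ~ S x).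
  { intro x; induction x as [x IH] using (well_founded_ind Hwf).
    intro Hx; apply Hnomin; exists x; split; [exact Hx |].
    intros [z [Hz Hzx]]; exact (IH z Hzx Hz). }
  exact (Hempty y Hy).
Qed.

Lemma preferential_min_sat_typ {Delta : Type} (lt : Delta -> Delta -> Prop)
  (I : interp Delta) (K : ranked_kb) (C D : concept) (u : Delta) :
  preferential_model lt I K -> typ_incl_in K C D ->
  min_lt lt (cext I C) u -> sat_typ_elem I C D u.
Proof.
  intros (_ & _ & _ & _ & _ & Hmin) HCD Hu.
  right; exact (Hmin C D HCD u Hu).
Qed.

Lemma preferential_model_T_compliant {Delta : Type}
  (lt : Delta -> Delta -> Prop) (I : interp Delta) (K : ranked_kb) :
  preferential_model lt I K -> T_compliant I K.
Proof.
  intros HK; pose proof HK as (Hstrict & _ & _ & _ & Hwf & _).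
  split; [exact Hstrict |].
  intros Ch _ [y Hy].
  destruct (well_founded_min_lt lt (cext I Ch) Hwf y Hy) as [u Hu].
  exists u; split; [exact (proj1 Hu) |].
  intros D HD; exact (preferential_min_sat_typ lt I K Ch D u HK HD Hu).
Qed.

Theorem proposition5 (K : ranked_kb) :
  (exists (Delta : Type) (lt : Delta -> Delta -> Prop) (I : interp Delta),
      preferential_model lt I K) ->
  exists (Delta : Type) (I : interp Delta), T_compliant I K.
Proof.
  intros (Delta & lt & I & HK).
  exists Delta, I.
  exact (preferential_model_T_compliant lt I K HK).
Qed.
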